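(* Let $\mathcal{X}$ be a set, let $r:\mathcal{X}\to\mathbb{R}$ be a reward function, and let $p$ be a probability distribution on $\mathcal{X}$ (with $r$ measurable). Under the Bradley–Terry model, the preference probability of $i$ over $j$ is $P(i\succ j)=\frac{\exp(r(i))}{\exp(r(i))+\exp(r(j))}$. Consider the binary classifier whose positive-class probability is $$P(y=1\mid x)=\mathbb{E}_{j\sim p}\big[P(x\succ j)\big]=\mathbb{E}_{j\sim p}\left[\frac{\exp(r(x))}{\exp(r(x))+\exp(r(j))}\right],$$ and let $l(x)=\log\frac{P(y=1\mid x)}{1-P(y=1\mid x)}$ be its logit. Then for all $x_1,x_2\in\mathcal{X}$, $$r(x_1)>r(x_2)\iff l(x_1)>l(x_2).$$
   Context: The classifier is trained on preference data generated by the Bradley–Terry model, with preference pairs treated as binary classification data; this is modeled by identifying the probability that $x$ is classified positive with the expected probability that $x$ is preferred over a competitor $j$ drawn at random from $p$. *)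

From HB Require Import structures.
From mathcomp Require Import all_boot all_order all_algebra.
From mathcomp Require Import all_classical all_reals all_analysis.
Set Implicit Arguments. Unset Strict Implicit. Unset Printing Implicit Defensive.
Import Order.TTheory GRing.Theory Num.Theory.
Local Open Scope ring_scope.

Definition bt_pref (R : realType) (X : Type) (r : X -> R) (i j : X) : R :=
  expR (r i) / (expR (r i) + expR (r j)).

Definition pos_prob (R : realType) (d : measure_display) (X : measurableType d)
  (p : probability X R) (r : X -> R) (x : X) : R :=
  Rintegral p setT (fun j => bt_pref r x j).

Definition bt_logit (R : realType) (d : measure_display) (X : measurableType d)
  (p : probability X R) (r : X -> R) (x : X) : R :=
  ln (pos_prob p r x / (1 - pos_prob p r x)).

From HB Require Import structures.
From mathcomp Require Import all_boot all_order all_algebra.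
From mathcomp Require Import all_classical all_reals all_analysis.
From mathcomp Require Import lra.
Import Order.TTheory GRing.Theory Num.Theory.
Import numFieldNormedType.Exports.
Local Open Scope ring_scope.
Local Open Scope classical_set_scope.

(* P(y = 1 | x) depends on x only through its reward a = r x: it is the score
   s(a) = E_{j ~ p}[e^a / (e^a + e^{r j})].  The integrand lies in (0, 1) and
   is strictly increasing in a, and a strict pointwise inequality survives
   integration against a probability measure, so s maps into (0, 1) and is
   strictly increasing.  The logit is strictly increasing on (0, 1), hence
   l = logit o s o r with logit o s strictly increasing, which both preserves
   and reflects the order of rewards. *)

Section Rintegral_positive.
Context {d} {T : measurableType d} {R : realType}.
Variables (mu : {measure set T -> \bar R}) (D : set T).
Hypotheses (mD : measurable D) (muD_gt0 : (0 < mu D)%E).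

Lemma Rintegral_gt0 (f : T -> R) : mu.-integrable D (EFin \o f) ->
  (forall x, D x -> 0 < f x) -> 0 < \int[mu]_(x in D) f x.
Proof.
move=> intf f_gt0; rewrite lt_neqAle Rintegral_ge0 ?andbT; last first.
  by move=> x Dx; exact/ltW/f_gt0.
apply/eqP => int0.
have mf := measurable_int mu intf.
have abs0 : (\int[mu]_(x in D) `|(EFin \o f) x|)%E = 0%E.
  rewrite -[RHS]/(0%:E) int0 fineK ?integrable_fin_num //.
  by apply: eq_integral => x /set_mem Dx /=; rewrite ger0_norm // ltW ?f_gt0.
have [N [mN muN0 DN]] := (ae_eq_integral_abs mu mD mf).1 abs0.
suff : (mu D <= mu N)%E by rewrite muN0 leNgt muD_gt0.
apply: le_measure; rewrite ?inE //.
by move=> x Dx; apply: DN => /(_ Dx) [] /eqP; rewrite gt_eqF ?f_gt0.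
Qed.

Lemma ltr_Rintegral (f g : T -> R) :
  mu.-integrable D (EFin \o f) -> mu.-integrable D (EFin \o g) ->
  (forall x, D x -> f x < g x) ->
  \int[mu]_(x in D) f x < \int[mu]_(x in D) g x.
Proof.
move=> intf intg fg; rewrite -subr_gt0 -RintegralB //.
apply: Rintegral_gt0 => [|x Dx]; first exact: (integrableB mD intg intf).
by rewrite subr_gt0 fg.
Qed.

End Rintegral_positive.

Definition logit {R : realType} (y : R) : R := ln (y / (1 - y)).

Lemma ltr_logit (R : realType) (a b : R) : 0 < a -> a < b -> b < 1 ->
  logit a < logit b.
Proof.
move=> a_gt0 ab b_lt1.
have b_gt0 := lt_trans a_gt0 ab; have a_lt1 := lt_trans ab b_lt1.
rewrite /logit ltr_ln ?posrE ?divr_gt0 ?subr_gt0 //.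
rewrite ltr_pdivrMr ?subr_gt0 // mulrAC ltr_pdivlMr ?subr_gt0 //.
nra.
Qed.

Section bradley_terry.
Context {R : realType} {X : Type} (r : X -> R).

Lemma bt_pref_gt0 i j : 0 < bt_pref r i j.
Proof. by rewrite divr_gt0 ?addr_gt0 ?expR_gt0. Qed.

Lemma bt_pref_lt1 i j : bt_pref r i j < 1.
Proof. by rewrite ltr_pdivrMr ?addr_gt0 ?expR_gt0 // mul1r ltrDl expR_gt0. Qed.

Lemma bt_pref_ltl i k j : r i < r k -> bt_pref r i j < bt_pref r k j.
Proof.
rewrite -ltr_expR => rik; have ei := expR_gt0 (r i); have ej := expR_gt0 (r j).
rewrite /bt_pref ltr_pdivrMr ?addr_gt0 ?expR_gt0 // mulrAC.
rewrite ltr_pdivlMr ?addr_gt0 ?expR_gt0 //.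
nra.
Qed.

End bradley_terry.

Lemma continuous_bt_pref (R : realType) (a : R) : continuous (bt_pref id a).
Proof.
move=> t; apply: cvgM; first exact: cvg_cst.
apply: cvgV; first by rewrite gt_eqF // addr_gt0 ?expR_gt0.
by apply: cvgD; [exact: cvg_cst | exact: continuous_expR].
Qed.

(* [pos_prob p r x] is convertible to [bt_score p r (r x)]. *)
Definition bt_score {R : realType} {d} {X : measurableType d}
    (p : probability X R) (r : X -> R) (a : R) : R :=
  \int[p]_(j in setT) bt_pref id a (r j).

Section bt_score.
Context {R : realType} {d} {X : measurableType d}.
Variables (p : probability X R) (r : X -> R).
Hypothesis mr : measurable_fun setT r.

Let p_setT_gt0 : (0 < p setT)%E.
Proof. by rewrite [p _]probability_setT lte01. Qed.

Lemma integrable_bt_pref a : p.-integrable setT (EFin \o (bt_pref id a \o r)).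
Proof.
apply: measurable_bounded_integrable => //.
- by rewrite -[ltLHS]/(p [set: X]) probability_setT ltry.
- apply: measurableT_comp => //.
  by apply: measurable_realfun.continuous_measurable_fun; exact: continuous_bt_pref.
exists 1; split => // M M1 j _ /=.
rewrite ger0_norm; last exact/ltW/bt_pref_gt0.
exact/ltW/(lt_trans (bt_pref_lt1 _ _ _)).
Qed.

Lemma bt_score_gt0 a : 0 < bt_score p r a.
Proof.
by apply: Rintegral_gt0 => // [|j _]; [exact: integrable_bt_pref | exact: bt_pref_gt0].
Qed.

Lemma bt_score_lt1 a : bt_score p r a < 1.
Proof.
have -> : 1 = \int[p]_(j in setT) (cst 1 j : R).
  by rewrite Rintegral_cst // -[Y in fine Y]/(p [set: X]) probability_setT mul1r.
apply: ltr_Rintegral => // [||j _]; last exact: bt_pref_lt1.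
- exact: integrable_bt_pref.
- exact: finite_measure_integrable_cst.
Qed.

Lemma bt_score_homo : {homo bt_score p r : a b / a < b}.
Proof.
move=> a b ab; apply: ltr_Rintegral => // [||j _].
- exact: integrable_bt_pref.
- exact: integrable_bt_pref.
exact: (bt_pref_ltl id).
Qed.

End bt_score.

Theorem theorem3p1 (R : realType) (d : measure_display) (X : measurableType d)
  (p : probability X R) (r : X -> R) (hr : measurable_fun setT r) (x1 x2 : X) :
  (r x1 > r x2) <-> (bt_logit p r x1 > bt_logit p r x2).
Proof.
have logit_score_mono : {mono logit \o bt_score p r : a b / a < b}.
  apply/leW_mono/le_mono => a b ab /=.
  by apply: ltr_logit; [exact: bt_score_gt0 | exact: bt_score_homo | exact: bt_score_lt1].
by rewrite -(logit_score_mono (r x2) (r x1)).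
Qed.
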